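(* There is an absolute constant $c>0$ such that for every finite simple graph $G=(V,E)$ with maximum degree $d\ge 1$, there is an injective placement of the vertices of $G$ on the unit sphere in $\mathbb{R}^3$ such that, drawing each edge as the straight-line segment between its endpoints, any two distinct edges sharing a common endpoint form an angle of at least $c/d$ at that endpoint (i.e., the 3D straight-line drawing has angular resolution $\Omega(1/d)$).
   Context: The angle between two segments sharing an endpoint is the angle in $[0,\pi]$ between the corresponding rays from that endpoint. The angular resolution of a drawing is the minimum, over all vertices $v$ and pairs of distinct edges incident to $v$, of the angle they form at $v$. *)

From Stdlib Require Import Reals Lra Lia List.
Open Scope R_scope.

Definition vec3 : Type := (R * R * R)%type.

Definition vsub (a b : vec3) : vec3 :=
  match a, b with (a1, a2, a3), (b1, b2, b3) => (a1 - b1, a2 - b2, a3 - b3) end.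

Definition dot (a b : vec3) : R :=
  match a, b with (a1, a2, a3), (b1, b2, b3) => a1 * b1 + a2 * b2 + a3 * b3 end.

Definition norm3 (a : vec3) : R := sqrt (dot a a).

Definition vangle (a b : vec3) : R := acos (dot a b / (norm3 a * norm3 b)).

Definition angle_at (pv pu pw : vec3) : R := vangle (vsub pu pv) (vsub pw pv).

(* A finite simple graph on the vertex set {0, ..., n-1} with boolean adjacency. *)
Definition simple_graph (n : nat) (adj : nat -> nat -> bool) : Prop :=
  (forall u v, (u < n)%nat -> (v < n)%nat -> adj u v = adj v u) /\
  (forall v, (v < n)%nat -> adj v v = false).

Definition degree (n : nat) (adj : nat -> nat -> bool) (v : nat) : nat :=
  length (filter (adj v) (seq 0 n)).

Definition max_degree_is (n : nat) (adj : nat -> nat -> bool) (d : nat) : Prop :=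
  (forall v, (v < n)%nat -> (degree n adj v <= d)%nat) /\
  (exists v, (v < n)%nat /\ degree n adj v = d).

(* Colour the vertices so that any two distinct vertices with a
   common neighbour get different colours (a distance-2 colouring); greedily,
   [d * d + 1] colours suffice since a vertex has at most [d * d] walks of
   length 2.  Arrange the colours on a [(d+1) x (d+1)] grid of mesh about
   [1/(4(d+1))] in the square [[0,1/2)^2], shift each vertex slightly inside
   its cell to make the placement injective, and lift the points vertically
   onto the unit sphere.  Two edges [vu], [vw] at a vertex [v] then end at
   differently coloured points, hence at chordal distance [>= 1/(4(d+1))],
   and an inscribed angle on the unit sphere is at least half the chord it
   subtends.  This gives angles [>= 1/(8(d+1)) >= 1/(16 d)]. *)

From Stdlib Require Import Reals Lra Lia List Classical.
Open Scope R_scope.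

(* Cross product; [dot P (cross V W)] is the determinant of [P], [V], [W]. *)
Definition cross (a b : vec3) : vec3 :=
  match a, b with
  | (a1, a2, a3), (b1, b2, b3) => (a2 * b3 - a3 * b2, a3 * b1 - a1 * b3, a1 * b2 - a2 * b1)
  end.

Lemma dot_self_nonneg (a : vec3) : 0 <= dot a a.
Proof. destruct a as [[a1 a2] a3]; simpl; nra. Qed.

Lemma dot_vsub_self_eq0 (P V : vec3) : dot (vsub P V) (vsub P V) = 0 -> P = V.
Proof.
  destruct P as [[p1 p2] p3], V as [[v1 v2] v3]; simpl; intros E.
  pose proof (Rle_0_sqr (p1 - v1)); pose proof (Rle_0_sqr (p2 - v2));
  pose proof (Rle_0_sqr (p3 - v3)); unfold Rsqr in *.
  assert (E1 : (p1 - v1) * (p1 - v1) = 0) by lra.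
  assert (E2 : (p2 - v2) * (p2 - v2) = 0) by lra.
  assert (E3 : (p3 - v3) * (p3 - v3) = 0) by lra.
  apply Rsqr_0_uniq in E1, E2, E3.
  replace v1 with p1 by lra; replace v2 with p2 by lra; replace v3 with p3 by lra.
  reflexivity.
Qed.

Lemma dot_vsub (a b c e : vec3) :
  dot (vsub a b) (vsub c e) = dot a c - dot a e - dot b c + dot b e.
Proof.
  destruct a as [[? ?] ?], b as [[? ?] ?], c as [[? ?] ?], e as [[? ?] ?]; simpl; ring.
Qed.

Lemma dot_comm (a b : vec3) : dot a b = dot b a.
Proof. destruct a as [[? ?] ?], b as [[? ?] ?]; simpl; ring. Qed.

(* The Gram determinant of [P], [V], [W] is the square of their determinant. *)
Lemma gram3 (P V W : vec3) :
  dot P P * dot V V * dot W W + 2 * dot P V * dot V W * dot P W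
  - dot P P * dot V W ^ 2 - dot V V * dot P W ^ 2 - dot W W * dot P V ^ 2
  = dot P (cross V W) ^ 2.
Proof.
  destruct P as [[? ?] ?], V as [[? ?] ?], W as [[? ?] ?]; simpl; ring.
Qed.

(* [acos t >= sin (acos t) = sqrt (1 - t^2)]: a lower bound on an angle through its sine. *)
Lemma acos_ge (t r : R) : -1 <= t <= 1 -> 0 <= r -> r ^ 2 <= 1 - t ^ 2 -> r <= acos t.
Proof.
  intros Ht Hr Hrt.
  assert (Hs : sin (acos t) = sqrt (1 - t ^ 2)) by (rewrite sin_acos by lra; unfold Rsqr; f_equal; ring).
  assert (Hs0 : 0 <= sqrt (1 - t ^ 2)) by apply sqrt_pos.
  assert (Hs2 : sqrt (1 - t ^ 2) ^ 2 = 1 - t ^ 2) by (rewrite pow2_sqrt; nra).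
  assert (Hsin : sin (acos t) <= acos t).
  { destruct (acos_bound t) as [[Hpos | Hz] _].
    - left; apply sin_lt_x; exact Hpos.
    - rewrite <- Hz, sin_0; lra. }
  nra.
Qed.

(* Lower bound on [vangle a b] from a lower bound on its squared sine,
   [1 - cos^2 = (|a|^2 |b|^2 - (a.b)^2) / (|a|^2 |b|^2)]. *)
Lemma vangle_ge (a b : vec3) (r : R) :
  0 < dot a a -> 0 < dot b b -> 0 <= r ->
  dot a a * dot b b * r ^ 2 <= dot a a * dot b b - dot a b ^ 2 ->
  r <= vangle a b.
Proof.
  intros Ha Hb Hr Hab. unfold vangle, norm3.
  set (t := dot a b / (sqrt (dot a a) * sqrt (dot b b))).
  assert (Hprod : 0 < dot a a * dot b b) by nra.
  assert (Ht2 : t ^ 2 = dot a b ^ 2 / (dot a a * dot b b)).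
  { unfold t, Rdiv. rewrite Rpow_mult_distr, pow_inv, Rpow_mult_distr, !pow2_sqrt by lra.
    reflexivity. }
  assert (Hrt : r ^ 2 <= 1 - t ^ 2).
  { rewrite Ht2. apply (Rmult_le_reg_r (dot a a * dot b b)); [exact Hprod|].
    field_simplify; lra. }
  apply acos_ge; [nra | exact Hr | exact Hrt].
Qed.

(* Inscribed angles on the unit sphere: the angle at [V] is at least half the
   chord [|P - W|].  Indeed [|a|^2 |b|^2 - (a.b)^2 - |a|^2 |b|^2 |P - W|^2 / 4]
   equals the squared determinant of [P], [V], [W] (the circumcircle of the
   triangle has radius at most 1), so the sine of the angle is >= |P - W|/2. *)
Lemma angle_ge_half_chord (P V W : vec3) (delta : R) :
  dot P P = 1 -> dot V V = 1 -> dot W W = 1 -> P <> V -> W <> V ->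
  0 <= delta -> delta ^ 2 <= dot (vsub P W) (vsub P W) ->
  delta / 2 <= angle_at V P W.
Proof.
  intros HP HV HW HPV HWV Hd Hdelta. unfold angle_at.
  assert (Ha : 0 < dot (vsub P V) (vsub P V)).
  { destruct (dot_self_nonneg (vsub P V)) as [|E]; [assumption|].
    exfalso; apply HPV, dot_vsub_self_eq0; auto. }
  assert (Hb : 0 < dot (vsub W V) (vsub W V)).
  { destruct (dot_self_nonneg (vsub W V)) as [|E]; [assumption|].
    exfalso; apply HWV, dot_vsub_self_eq0; auto. }
  apply vangle_ge; [exact Ha | exact Hb | lra |].
  pose proof (gram3 P V W) as Hg.
  pose proof (Rle_0_sqr (dot P (cross V W))) as Hsq; unfold Rsqr in Hsq.
  rewrite !dot_vsub in *. rewrite (dot_comm W V), (dot_comm W P), (dot_comm V P) in *.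
  rewrite HP, HV, HW in *.
  set (x := dot P V) in *; set (y := dot V W) in *; set (z := dot P W) in *.
  set (aa := 1 - x - x + 1) in *; set (bb := 1 - y - y + 1) in *.
  assert (Hid : aa * bb - (z - x - y + 1) ^ 2 = aa * bb * ((1 - z - z + 1) / 4) + dot P (cross V W) ^ 2).
  { unfold aa, bb. rewrite <- Hg. field. }
  assert (Hab : 0 < aa * bb) by nra.
  rewrite Hid.
  assert (aa * bb * (delta / 2) ^ 2 <= aa * bb * ((1 - z - z + 1) / 4))
    by (apply Rmult_le_compat_l; lra).
  nra.
Qed.

Lemma free_color (l : list nat) (D : nat) :
  (length l <= D)%nat -> exists c, (c <= D)%nat /\ ~ In c l.
Proof.
  intros Hl. apply NNPP. intros Hnone.
  assert (Hincl : incl (seq 0 (S D)) l).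
  { intros c Hc. apply in_seq in Hc. apply NNPP. intros Hn.
    apply Hnone. exists c. split; [lia | exact Hn]. }
  pose proof (NoDup_incl_length (seq_NoDup (S D) 0) Hincl) as Hlen.
  rewrite length_seq in Hlen. lia.
Qed.

Lemma greedy_coloring (D N : nat) (L : nat -> list nat) :
  (forall u, (u < N)%nat -> (length (L u) <= D)%nat) ->
  (forall u w, (u < N)%nat -> (w < N)%nat -> In w (L u) -> In u (L w)) ->
  exists col : nat -> nat, (forall u, (col u <= D)%nat) /\
    forall u w, (u < N)%nat -> (w < N)%nat -> u <> w -> In w (L u) -> col u <> col w.
Proof.
  induction N as [|N IH]; intros Hlen Hsym.
  - exists (fun _ => 0%nat). split; intros; lia.
  - destruct IH as [col [Hbound Hproper]].
    { intros u Hu; apply Hlen; lia. }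
    { intros u w Hu Hw; apply Hsym; lia. }
    destruct (free_color (map col (L N)) D) as [c [Hc Hfree]].
    { rewrite length_map; apply Hlen; lia. }
    exists (fun x => if Nat.eqb x N then c else col x). split.
    + intros u. destruct (Nat.eqb u N); auto.
    + intros u w Hu Hw Huw Hin.
      destruct (Nat.eqb_spec u N), (Nat.eqb_spec w N); subst; try congruence.
      * intros E. apply Hfree. rewrite E. apply in_map; exact Hin.
      * intros E. apply Hfree. rewrite <- E. apply in_map, Hsym; auto.
      * apply Hproper; auto; lia.
Qed.

Definition neighbours (n : nat) (adj : nat -> nat -> bool) (v : nat) : list nat :=
  filter (adj v) (seq 0 n).

(* Vertices reachable by a walk of length 2: the conflicts of a distance-2 colouring. *)
Definition second_neighbours (n : nat) (adj : nat -> nat -> bool) (u : nat) : list nat :=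
  flat_map (neighbours n adj) (neighbours n adj u).

Lemma in_neighbours (n : nat) (adj : nat -> nat -> bool) (v u : nat) : In u (neighbours n adj v) <-> (u < n)%nat /\ adj v u = true.
Proof. unfold neighbours. rewrite filter_In, in_seq. intuition lia. Qed.

Lemma flat_map_length_le {A B : Type} (f : A -> list B) (l : list A) (k : nat) :
  (forall x, In x l -> (length (f x) <= k)%nat) -> (length (flat_map f l) <= length l * k)%nat.
Proof.
  induction l as [|a l IH]; intros Hf; simpl; [lia|].
  rewrite length_app.
  assert (length (f a) <= k)%nat by (apply Hf; left; reflexivity).
  assert (length (flat_map f l) <= length l * k)%nat by (apply IH; intros; apply Hf; right; auto).
  lia.
Qed.

Lemma second_neighbours_length (n : nat) (adj : nat -> nat -> bool) (d u : nat) :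
  (forall v, (v < n)%nat -> (degree n adj v <= d)%nat) -> (u < n)%nat ->
  (length (second_neighbours n adj u) <= d * d)%nat.
Proof.
  intros Hdeg Hu. unfold second_neighbours.
  eapply Nat.le_trans; [apply flat_map_length_le with (k := d)|].
  - intros v Hv. apply in_neighbours in Hv. apply Hdeg, Hv.
  - apply Nat.mul_le_mono_r, Hdeg, Hu.
Qed.

Lemma in_second_neighbours (n : nat) (adj : nat -> nat -> bool) (u w : nat) :
  In w (second_neighbours n adj u) <->
  exists v, (v < n)%nat /\ (w < n)%nat /\ adj u v = true /\ adj v w = true.
Proof.
  unfold second_neighbours. rewrite in_flat_map. split.
  - intros [v [Hv Hw]]. apply in_neighbours in Hv, Hw. exists v; tauto.
  - intros [v [Hv [Hw [Huv Hvw]]]]. exists v. rewrite !in_neighbours. tauto.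
Qed.

Lemma second_neighbours_sym (n : nat) (adj : nat -> nat -> bool) (u w : nat) :
  (forall u v, (u < n)%nat -> (v < n)%nat -> adj u v = adj v u) -> (u < n)%nat ->
  In w (second_neighbours n adj u) -> In u (second_neighbours n adj w).
Proof.
  intros Hsym Hu Hin. apply in_second_neighbours in Hin.
  destruct Hin as [v [Hv [Hw [Huv Hvw]]]].
  apply in_second_neighbours. exists v.
  rewrite Hsym, (Hsym v u) by assumption. tauto.
Qed.

Lemma distance_two_coloring (n : nat) (adj : nat -> nat -> bool) (d : nat) :
  simple_graph n adj ->
  (forall v, (v < n)%nat -> (degree n adj v <= d)%nat) ->
  exists col : nat -> nat, (forall u, (col u <= d * d)%nat) /\
    forall v u w, (v < n)%nat -> (u < n)%nat -> (w < n)%nat ->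
      adj v u = true -> adj v w = true -> u <> w -> col u <> col w.
Proof.
  intros [Hsym _] Hdeg.
  destruct (greedy_coloring (d * d) n (second_neighbours n adj)) as [col [Hbound Hproper]].
  - intros u Hu. apply second_neighbours_length; assumption.
  - intros u w Hu _. apply second_neighbours_sym; assumption.
  - exists col. split; [exact Hbound|].
    intros v u w Hv Hu Hw Hvu Hvw Huw. apply Hproper; try assumption.
    apply in_second_neighbours. exists v. rewrite Hsym by assumption. tauto.
Qed.

Definition lift (x y : R) : vec3 := (x, y, sqrt (1 - x ^ 2 - y ^ 2)).

Lemma lift_unit (x y : R) : x ^ 2 + y ^ 2 <= 1 -> dot (lift x y) (lift x y) = 1.
Proof. intros H. unfold lift, dot. rewrite sqrt_sqrt; [ring | lra]. Qed.

Lemma lift_dist (x y x' y' : R) :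
  (x - x') ^ 2 + (y - y') ^ 2 <= dot (vsub (lift x y) (lift x' y')) (vsub (lift x y) (lift x' y')).
Proof.
  unfold lift, vsub, dot.
  pose proof (Rle_0_sqr (sqrt (1 - x ^ 2 - y ^ 2) - sqrt (1 - x' ^ 2 - y' ^ 2))).
  unfold Rsqr in *. lra.
Qed.

Lemma nat_dist_sq (i j : nat) : i <> j -> 1 <= (INR i - INR j) ^ 2.
Proof.
  intros H. destruct (Nat.lt_gt_cases i j) as [[Hlt | Hlt] _]; [exact H | |].
  - assert (Hle : (S i <= j)%nat) by lia. apply le_INR in Hle. rewrite S_INR in Hle. nra.
  - assert (Hle : (S j <= i)%nat) by lia. apply le_INR in Hle. rewrite S_INR in Hle. nra.
Qed.

Lemma interleave_sep (i j : nat) (f g : R) :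
  i <> j -> 0 <= f < 1 -> 0 <= g < 1 -> 1 <= (2 * (INR i - INR j) + (f - g)) ^ 2.
Proof.
  intros Hij Hf Hg. pose proof (nat_dist_sq i j Hij) as Hd.
  set (D := INR i - INR j) in *.
  destruct (Rle_lt_dec D 0).
  - assert (D <= -1) by nra. assert (2 * D + (f - g) <= -1) by lra. nra.
  - assert (1 <= D) by nra. assert (1 <= 2 * D + (f - g)) by lra. nra.
Qed.

Lemma frac_bound (v n : nat) : (v < n)%nat -> 0 <= INR v / INR n < 1.
Proof.
  intros H. assert (Hn : 0 < INR n) by (apply lt_0_INR; lia).
  assert (Hvn : INR v < INR n) by (apply lt_INR; exact H).
  pose proof (pos_INR v). split.
  - apply Rmult_le_pos; [lra | left; apply Rinv_0_lt_compat, Hn].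
  - apply (Rmult_lt_reg_r (INR n)); [exact Hn|]. field_simplify; lra.
Qed.

(* Colour [c] of vertex [v] is sent to the grid cell [(c mod m, c / m)] of
   side [1/(4m)] (columns) by [1/(2m)] (rows) in [[0,1/2)^2]; the offset
   [v/n < 1] inside the cell keeps vertices of equal colour apart. *)
Section GridPlacement.

Variables (n m : nat) (col : nat -> nat).
Hypothesis m_pos : (0 < m)%nat.

Definition grid_x (v : nat) : R := (2 * INR (col v mod m) + INR v / INR n) / (4 * INR m).

Definition grid_y (v : nat) : R := INR (col v / m) / (2 * INR m).

Definition placement (v : nat) : vec3 := lift (grid_x v) (grid_y v).

Let INR_m_pos : 0 < INR m.
Proof. apply lt_0_INR; exact m_pos. Qed.

Lemma grid_x_bound (v : nat) : (v < n)%nat -> 0 <= grid_x v < 1 / 2.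
Proof.
  intros Hv. unfold grid_x. pose proof (frac_bound v n Hv).
  set (f := INR v / INR n) in *.
  assert (Hr : (col v mod m < m)%nat) by (apply Nat.mod_upper_bound; lia).
  apply le_INR in Hr. rewrite S_INR in Hr. pose proof (pos_INR (col v mod m)).
  split.
  - apply Rmult_le_pos; [lra | left; apply Rinv_0_lt_compat; lra].
  - apply (Rmult_lt_reg_r (4 * INR m)); [lra|]. field_simplify; lra.
Qed.

Lemma grid_y_bound (v : nat) : (col v < m * m)%nat -> 0 <= grid_y v < 1 / 2.
Proof.
  intros Hc. unfold grid_y.
  assert (Hq : (col v / m < m)%nat) by (apply Nat.Div0.div_lt_upper_bound; lia).
  apply le_INR in Hq. rewrite S_INR in Hq. pose proof (pos_INR (col v / m)).
  split.
  - apply Rmult_le_pos; [lra | left; apply Rinv_0_lt_compat; lra].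
  - apply (Rmult_lt_reg_r (2 * INR m)); [lra|]. field_simplify; lra.
Qed.

Lemma placement_unit (v : nat) :
  (v < n)%nat -> (col v < m * m)%nat -> dot (placement v) (placement v) = 1.
Proof.
  intros Hv Hc. pose proof (grid_x_bound v Hv). pose proof (grid_y_bound v Hc).
  apply lift_unit. nra.
Qed.

(* The first coordinate alone determines the vertex. *)
Lemma placement_inj (u v : nat) :
  (u < n)%nat -> (v < n)%nat -> placement u = placement v -> u = v.
Proof.
  intros Hu Hv E. injection E as Ex _ _. unfold grid_x in Ex.
  assert (Hn : 0 < INR n) by (apply lt_0_INR; lia).
  set (fu := INR u / INR n) in *; set (fv := INR v / INR n) in *.
  assert (Hsum : 2 * (INR (col u mod m) - INR (col v mod m)) + (fu - fv) = 0).
  { apply (Rmult_eq_compat_r (4 * INR m)) in Ex. field_simplify in Ex; lra. }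
  destruct (Nat.eq_dec (col u mod m) (col v mod m)) as [Er | Nr].
  - rewrite Er, Rminus_diag, Rmult_0_r, Rplus_0_l in Hsum.
    apply INR_eq. apply (Rmult_eq_reg_r (/ INR n)); [| apply Rinv_neq_0_compat; lra].
    unfold fu, fv, Rdiv in Hsum. lra.
  - exfalso.
    pose proof (interleave_sep _ _ fu fv Nr (frac_bound u n Hu) (frac_bound v n Hv)) as Hsep.
    rewrite Hsum in Hsep. lra.
Qed.

Lemma placement_sep (u w : nat) :
  (u < n)%nat -> (w < n)%nat -> col u <> col w ->
  (1 / (4 * INR m)) ^ 2 <= dot (vsub (placement u) (placement w)) (vsub (placement u) (placement w)).
Proof.
  intros Hu Hw Hc. eapply Rle_trans; [| apply lift_dist].
  assert (Hn : 0 < INR n) by (apply lt_0_INR; lia).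
  assert (Hsq : (1 / (4 * INR m)) ^ 2 = 1 / (16 * INR m ^ 2)) by (field; lra).
  assert (H16 : 0 < 16 * INR m ^ 2) by nra.
  rewrite Hsq.
  destruct (Nat.eq_dec (col u / m) (col w / m)) as [Eq | Nq].
  - assert (Nr : col u mod m <> col w mod m).
    { intros Er. apply Hc.
      rewrite (Nat.div_mod_eq (col u) m), (Nat.div_mod_eq (col w) m). lia. }
    pose proof (interleave_sep _ _ _ _ Nr (frac_bound u n Hu) (frac_bound w n Hw)) as Hx.
    assert (Ex : (grid_x u - grid_x w) ^ 2
                 = (2 * (INR (col u mod m) - INR (col w mod m))
                    + (INR u / INR n - INR w / INR n)) ^ 2 / (16 * INR m ^ 2))
      by (unfold grid_x; field; lra).
    assert (1 / (16 * INR m ^ 2) <= (grid_x u - grid_x w) ^ 2)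
      by (rewrite Ex; apply Rmult_le_compat_r; [left; apply Rinv_0_lt_compat |]; lra).
    pose proof (pow2_ge_0 (grid_y u - grid_y w)). lra.
  - pose proof (nat_dist_sq _ _ Nq) as Hy.
    assert (Ey : (grid_y u - grid_y w) ^ 2
                 = 4 * (INR (col u / m) - INR (col w / m)) ^ 2 / (16 * INR m ^ 2))
      by (unfold grid_y; field; lra).
    assert (1 / (16 * INR m ^ 2) <= (grid_y u - grid_y w) ^ 2)
      by (rewrite Ey; apply Rmult_le_compat_r; [left; apply Rinv_0_lt_compat |]; lra).
    pose proof (pow2_ge_0 (grid_x u - grid_x w)). lra.
Qed.

End GridPlacement.

Lemma neighbour_neq (n : nat) (adj : nat -> nat -> bool) (v u : nat) :
  simple_graph n adj -> (v < n)%nat -> adj v u = true -> u <> v.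
Proof. intros [_ Hirr] Hv Hvu ->. rewrite Hirr in Hvu by exact Hv. discriminate. Qed.

(* The grid spacing [1/(4(d+1))] halved still dominates [1/(16 d)] once [d >= 1]. *)
Lemma spacing_vs_degree (d : nat) : (1 <= d)%nat -> 1 / 16 / INR d <= 1 / (4 * INR (S d)) / 2.
Proof.
  intros Hd. apply le_INR in Hd. simpl in Hd. rewrite S_INR.
  apply (Rmult_le_reg_r (16 * INR d * (INR d + 1))); [nra|].
  field_simplify; lra.
Qed.

Theorem theorem1 :
  exists c : R, 0 < c /\
  forall (n : nat) (adj : nat -> nat -> bool) (d : nat),
    simple_graph n adj ->
    max_degree_is n adj d ->
    (1 <= d)%nat ->
    exists p : nat -> vec3,
      (forall u v, (u < n)%nat -> (v < n)%nat -> p u = p v -> u = v) /\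
      (forall v, (v < n)%nat -> norm3 (p v) = 1) /\
      (forall v u w, (v < n)%nat -> (u < n)%nat -> (w < n)%nat ->
         adj v u = true -> adj v w = true -> u <> w ->
         c / INR d <= angle_at (p v) (p u) (p w)).
Proof.
  exists (1 / 16). split; [lra|].
  intros n adj d Hsimple [Hdeg _] Hd.
  destruct (distance_two_coloring n adj d Hsimple Hdeg) as [col [Hbound Hproper]].
  assert (Hm : (0 < S d)%nat) by lia.
  assert (Hcol : forall v, (col v < S d * S d)%nat) by (intros v; specialize (Hbound v); nia).
  pose (p := placement n (S d) col).
  assert (Hunit : forall v, (v < n)%nat -> dot (p v) (p v) = 1)
    by (intros v Hv; apply placement_unit; auto).
  assert (Hinj : forall u v, (u < n)%nat -> (v < n)%nat -> p u = p v -> u = v)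
    by (intros u v; apply placement_inj; exact Hm).
  exists p. split; [exact Hinj | split].
  - intros v Hv. unfold norm3. rewrite Hunit by exact Hv. apply sqrt_1.
  - intros v u w Hv Hu Hw Hvu Hvw Huw.
    assert (HS : 0 < INR (S d)) by (apply lt_0_INR; exact Hm).
    eapply Rle_trans; [apply (spacing_vs_degree d Hd) |].
    apply angle_ge_half_chord; auto.
    + intros E. apply (neighbour_neq n adj v u Hsimple Hv Hvu), Hinj; assumption.
    + intros E. apply (neighbour_neq n adj v w Hsimple Hv Hvw), Hinj; assumption.
    + unfold Rdiv. rewrite Rmult_1_l. left; apply Rinv_0_lt_compat; lra.
    + apply placement_sep; auto. apply (Hproper v); assumption.
Qed.
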